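(* Let $A$ be a finite set and let $<_1$ and $<_2$ be semi-linear strict partial orders on $A$. If the transitive closure $<_1\bar\cup<_2$ of the union of the relations $<_1$ and $<_2$ is irreflexive, then it is a semi-linear strict partial order.
   Context: A strict partial order on $A$ is a transitive irreflexive relation. A strict partial order $<$ is semi-linear if there is a surjective function $h:A\to\{1,\dots,l\}$ (for some $l$) such that $a<b$ iff $h(a)<h(b)$. *)

From Stdlib Require Import Relations Relation_Operators.
From mathcomp Require Import all_boot.

Definition strict_partial_order {A : Type} (R : A -> A -> Prop) : Prop :=
  (forall a b c, R a b -> R b c -> R a c) /\ (forall a, ~ R a a).

Definition semi_linear {A : Type} (R : A -> A -> Prop) : Prop :=
  strict_partial_order R /\
  exists (l : nat) (h : A -> nat),
    (forall a, 1 <= h a <= l) /\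
    (forall k, 1 <= k <= l -> exists a, h a = k) /\
    (forall a b, R a b <-> h a < h b).

Definition rel_union {A : Type} (R1 R2 : A -> A -> Prop) : A -> A -> Prop :=
  fun a b => R1 a b \/ R2 a b.

Definition tc_union {A : Type} (R1 R2 : A -> A -> Prop) : A -> A -> Prop :=
  clos_trans A (rel_union R1 R2).

From Stdlib Require Import Relations Relation_Operators.
From mathcomp Require Import all_boot.
From mathcomp Require Import boolp.

(* A semi-linear order is negatively transitive (a < b implies a < c or c < b),
   and this property passes to unions and to transitive closures.  Conversely,
   on a finite set a negatively transitive strict partial order is semi-linear:
   a < b holds exactly when the down-set of a is strictly smaller than that of
   b, and ranking the distinct down-set sizes yields the surjective level map. *)

Definition negatively_transitive {A : Type} (R : A -> A -> Prop) : Prop :=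
  forall a b c, R a b -> R a c \/ R c b.

Lemma semi_linear_negatively_transitive (A : Type) (R : A -> A -> Prop) :
  semi_linear R -> negatively_transitive R.
Proof.
move=> [_ [l [h [_ [_ Rh]]]]] a b c /Rh hab.
case: (ltnP (h a) (h c)) => hac; first by left; apply/Rh.
by right; apply/Rh; apply: leq_ltn_trans hab.
Qed.

Lemma rel_union_negatively_transitive (A : Type) (R1 R2 : A -> A -> Prop) :
  negatively_transitive R1 -> negatively_transitive R2 ->
  negatively_transitive (rel_union R1 R2).
Proof.
move=> n1 n2 a b c [/(n1 _ _ c) | /(n2 _ _ c)] [] ?;
  by [left; left | left; right | right; left | right; right].
Qed.

Lemma clos_trans_negatively_transitive (A : Type) (R : A -> A -> Prop) :
  negatively_transitive R -> negatively_transitive (clos_trans A R).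
Proof.
move=> nR a b c /clos_trans_t1n_iff [y aRy | y z aRy yRz].
  by case: (nR _ _ c aRy) => ?; [left | right]; apply: t_step.
case: (nR _ _ c aRy) => ?; first by left; apply: t_step.
by right; apply: t_trans (t_step _ _ _ _ _) (clos_t1n_trans _ _ _ _ yRz).
Qed.

Lemma index_sorted_ltn {s : seq nat} : sorted ltn s ->
  {in s &, forall x y, (x < y) = (index x s < index y s)}.
Proof.
move=> s_lt x y xs ys; apply/idP/idP; last exact: (sorted_ltn_index ltn_trans).
apply: contraTT; rewrite -!leqNgt; apply: (sorted_leq_index leq_trans leqnn) => //.
by apply: sub_sorted s_lt => m n /ltnW.
Qed.

(* The dense ranking of [f]: the position of [f a] among the distinct values of [f]. *)
Lemma dense_rank (A : finType) (f : A -> nat) :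
  exists (l : nat) (h : A -> nat),
    (forall a, 1 <= h a <= l) /\
    (forall k, 1 <= k <= l -> exists a, h a = k) /\
    (forall a b, f a < f b <-> h a < h b).
Proof.
pose s := sort leq (undup (map f (enum A))).
have s_lt : sorted ltn s.
  by rewrite ltn_sorted_uniq_leq sort_uniq undup_uniq (sort_sorted leq_total).
have fs a : f a \in s by rewrite mem_sort mem_undup map_f ?mem_enum.
exists (size s), (fun a => (index (f a) s).+1); split; last split.
- by move=> a; rewrite ltnS index_mem fs.
- case=> // k /andP[_ ks].
  have /mapP[a _ fa] : nth 0 s k \in map f (enum A).
    by rewrite -mem_undup -(mem_sort leq) mem_nth.
  by exists a; rewrite -fa index_uniq // (sorted_uniq ltn_trans ltnn).
- by move=> a b; rewrite ltnS (index_sorted_ltn s_lt _ _ (fs a) (fs b)).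
Qed.

Section FiniteWeakOrder.

Variables (A : finType) (T : A -> A -> Prop).
Hypotheses (T_spo : strict_partial_order T) (T_neg : negatively_transitive T).

Definition down_set (a : A) : {set A} := [set b | `[< T b a >]].

Lemma down_set_proper a b : T a b -> down_set a \proper down_set b.
Proof.
case: T_spo => T_tr T_irr ab; apply/properP; split.
  by apply/subsetP => c; rewrite !inE => /asboolP ca; apply/asboolP; apply: T_tr ab.
by exists a; rewrite inE; apply/asboolP; [exact: ab | exact: T_irr].
Qed.

Lemma down_set_sub a b : ~ T a b -> down_set b \subset down_set a.
Proof.
move=> nab; apply/subsetP => c; rewrite !inE => /asboolP /(T_neg _ _ a).
by case=> // ca; apply/asboolP.
Qed.

Lemma T_card_down_set a b : T a b <-> #|down_set a| < #|down_set b|.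
Proof.
split=> [/down_set_proper/proper_card // | lt_ab].
have [// | /down_set_sub/subset_leq_card] := pselect (T a b).
by rewrite leqNgt lt_ab.
Qed.

Lemma finite_negatively_transitive_semi_linear : semi_linear T.
Proof.
have [l [h [h_range [h_onto h_mono]]]] := @dense_rank _ (fun a => #|down_set a|).
split=> //; exists l, h; do 2!split=> //.
by move=> a b; rewrite T_card_down_set h_mono.
Qed.

End FiniteWeakOrder.

Theorem lemma4p2 (A : finType) (R1 R2 : A -> A -> Prop) :
  semi_linear R1 -> semi_linear R2 ->
  (forall a, ~ tc_union R1 R2 a a) ->
  semi_linear (tc_union R1 R2).
Proof.
move=> S1 S2 irr; apply: finite_negatively_transitive_semi_linear.
- by split=> // a b c; apply: t_trans.
- apply/clos_trans_negatively_transitive/rel_union_negatively_transitive;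
  exact: semi_linear_negatively_transitive.
Qed.
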